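(* Let $A$ be the adjacency matrix of a graph $G=(V,E)$ on $p$ vertices having at least one edge. Let $\vartheta(\overline{G})$ denote the Lovász theta number of the complement $\overline{G}$ of $G$. Then \[ t_{pos}\ge\max\left\{1,\ -\lambda_{min}(A),\ \frac{-p\,\lambda_{min}(A)}{|E|},\ \frac{-p\,\lambda_{min}(A)}{t_{eb}},\ \frac{\lambda_{max}(A)}{\vartheta(\overline{G})-1}\right\}. \]
   Context: $A=(a_{i,j})$ is a self-adjoint $p\times p$ matrix with entries in $\{0,1\}$ and zero diagonal, and $E=\{(i,j): a_{i,j}=1\}$ (ordered pairs), so $G=(V,E)$ is the corresponding simple graph. $\lambda_{min}(A),\lambda_{max}(A)$ are the least and greatest eigenvalues of $A$. $S_A: M_p\to M_p$ is the Schur product map $S_A(X)=(a_{i,j}x_{i,j})$; $tr(X)=\frac1p\mathrm{Tr}(X)$; $\delta(X)=tr(X)I_p$; $\gamma_t=t\delta+S_A$ for real $t$. $t_{pos}=\min\{t:\gamma_t\text{ is a positive map}\}$ and $t_{eb}=\min\{t:\gamma_t\text{ is entanglement breaking}\}$, where $\phi:M_p\to M_p$ is entanglement breaking if $\phi(X)=\sum_k v_kw_k^*Xw_kv_k^*$ for finitely many vectors $w_k,v_k\in\mathbb{C}^p$. The Lovász theta number of $\overline{G}$ may be taken as $\vartheta(\overline{G})=\min\{\lambda_{max}(H): H=H^*\in M_p,\ H_{i,i}=1\ \forall i,\ H_{i,j}=1 \text{ whenever } a_{i,j}=1\}$. *)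

From mathcomp Require Import all_boot all_algebra.
From mathcomp Require Import reals.
From mathcomp.real_closed Require Import complex.
Set Implicit Arguments.
Unset Strict Implicit.
Unset Printing Implicit Defensive.
Import GRing.Theory Num.Theory.
Local Open Scope ring_scope.
Local Open Scope sesquilinear_scope.
Local Open Scope complex_scope.

Section Defs.
Variable R : realType.
Local Notation C := (R[i]).

Definition selfadjoint (p : nat) (X : 'M[C]_p) : Prop := X ^t* = X.

Definition psd (p : nat) (X : 'M[C]_p) : Prop :=
  selfadjoint X /\ forall v : 'cV[C]_p, 0 <= ((v ^t* *m X *m v) 0 0).

Definition positive_map (p : nat) (phi : 'M[C]_p -> 'M[C]_p) : Prop :=
  forall X, psd X -> psd (phi X).

Definition entanglement_breaking (p : nat) (phi : 'M[C]_p -> 'M[C]_p) : Prop :=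
  exists (n : nat) (v w : 'I_n -> 'cV[C]_p),
    forall X, phi X = \sum_(k < n) (v k *m (w k) ^t* *m X *m w k *m (v k) ^t*).

Definition is_lambda_min (p : nat) (X : 'M[C]_p) (l : R) : Prop :=
  eigenvalue X l%:C /\ forall a : C, eigenvalue X a -> l%:C <= a.
Definition is_lambda_max (p : nat) (X : 'M[C]_p) (l : R) : Prop :=
  eigenvalue X l%:C /\ forall a : C, eigenvalue X a -> a <= l%:C.

Definition is_min (P : R -> Prop) (t : R) : Prop :=
  P t /\ forall s, P s -> t <= s.

Definition adjmx (p : nat) (e : rel 'I_p) : 'M[C]_p :=
  \matrix_(i, j) (e i j)%:R.

(* edge set E as ordered pairs *)
Definition edges (p : nat) (e : rel 'I_p) : {set 'I_p * 'I_p} :=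
  [set ij | e ij.1 ij.2].

Definition schur (p : nat) (A X : 'M[C]_p) : 'M[C]_p :=
  \matrix_(i, j) (A i j * X i j).

Definition ntr (p : nat) (X : 'M[C]_p) : C := \tr X / p%:R.
Definition delta (p : nat) (X : 'M[C]_p) : 'M[C]_p := (ntr X)%:M.

Definition gamma (p : nat) (A : 'M[C]_p) (t : R) (X : 'M[C]_p) : 'M[C]_p :=
  t%:C *: delta X + schur A X.

Definition is_t_pos (p : nat) (A : 'M[C]_p) (t : R) : Prop :=
  is_min (fun s => positive_map (gamma A s)) t.
Definition is_t_eb (p : nat) (A : 'M[C]_p) (t : R) : Prop :=
  is_min (fun s => entanglement_breaking (gamma A s)) t.

(* feasible matrices in the theta-number program for the complement of G *)
Definition theta_feasible (p : nat) (e : rel 'I_p) (H : 'M[C]_p) : Prop :=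
  selfadjoint H /\ (forall i, H i i = 1) /\ (forall i j, e i j -> H i j = 1).

Definition is_theta_compl (p : nat) (e : rel 'I_p) (th : R) : Prop :=
  (exists H, theta_feasible e H /\ is_lambda_max H th) /\
  (forall H l, theta_feasible e H -> is_lambda_max H l -> th <= l).

End Defs.

(* Every bound comes from feeding gamma_t a well-chosen positive matrix.
   On the all-ones matrix J, gamma_t(J) = tI + A, so t_pos >= -lambda_min.
   For an edge ij and u = e_i + e_j, the 2x2 principal minor of gamma_t(u u^* )
   at {i, j} gives t_pos >= p/2 >= 1; together with |E| + 2 lambda_min >= 0
   this bounds -p lambda_min/|E|.  If gamma_t is entanglement breaking, its
   Choi-type sum of squares |M_k(i,i) - M_k(j,j)|^2 forces t_eb >= p, so
   -p lambda_min/t_eb <= -lambda_min.  Finally, for a theta-feasible H with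
   largest eigenvalue th, th I - H is positive and
   gamma_t(th I - H) = t (th - 1) I - A, whence lambda_max <= t_pos (th - 1). *)

From mathcomp Require Import all_boot all_algebra.
From mathcomp Require Import reals.
From mathcomp.real_closed Require Import complex.
From mathcomp Require Import ring lra.
Set Implicit Arguments.
Unset Strict Implicit.
Unset Printing Implicit Defensive.
Import GRing.Theory Num.Theory order.Order.TTheory.

Local Open Scope ring_scope.
Local Open Scope sesquilinear_scope.
Local Open Scope complex_scope.

Lemma ler_pair_sum (R : numDomainType) n (F : 'I_n -> R) i j :
  i != j -> (forall k, 0 <= F k) -> F i + F j <= \sum_k F k.
Proof.
move=> ij F_ge0; rewrite (bigD1 i) //= (bigD1 j) 1?eq_sym //= addrA lerDl.
exact: sumr_ge0.
Qed.

Section ComplexMatrix.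
Variables (R : realType) (n : nat).
Local Notation C := R[i].
Implicit Types (X H : 'M[C]_n) (u v : 'cV[C]_n) (r : 'rV[C]_n).

Lemma trmxC_delta (i : 'I_n) : (delta_mx i 0 : 'cV[C]_n)^t* = delta_mx 0 i.
Proof. by apply/matrixP => a b; rewrite !mxE rmorph_nat andbC. Qed.

Lemma delta_qform X i j :
  ((delta_mx 0 i : 'rV[C]_n) *m X *m (delta_mx j 0 : 'cV[C]_n)) 0 0 = X i j.
Proof. by rewrite -rowE -colE !mxE. Qed.

Lemma mxtrace_delta a b : \tr (delta_mx a b : 'M[C]_n) = (a == b)%:R.
Proof.
rewrite /mxtrace (bigD1 a) //= big1 ?addr0; first by rewrite mxE eqxx.
by move=> k ka; rewrite mxE (negbTE ka).
Qed.

Lemma row_qformE X r :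
  (r *m X *m r^t*) 0 0 = \sum_a \sum_b r 0 a * X a b * (r 0 b)^*.
Proof.
rewrite mxE exchange_big; apply: eq_bigr => a _ /=.
by rewrite mxE mulr_suml; apply: eq_bigr => b _; rewrite !mxE.
Qed.

Lemma outer_entry u a b : (u *m u^t*) a b = u a 0 * (u b 0)^*.
Proof. by rewrite mxE big_ord1 !mxE. Qed.

Lemma dotmx_gt0 r : r != 0 -> 0 < (r *m r^t*) 0 0.
Proof.
move=> r0; rewrite mxE.
have [k rk] : exists k, r 0 k != 0.
  apply/existsP; apply: contraR r0; rewrite negb_exists => /forallP r_eq0.
  by apply/eqP/matrixP => a b; rewrite ord1 mxE; exact/eqP/negPn/r_eq0.
rewrite (bigD1 k) //= ltr_wpDr ?sumr_ge0 //.
  by move=> b _; rewrite !mxE mul_conjC_ge0.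
by rewrite !mxE mul_conjC_gt0.
Qed.

(* MathComp eigenvectors are rows, so the quadratic form is tested at r^t*. *)
Lemma psd_shift_eigenvalue X r a c :
  psd (c *: 1%:M + X) -> r *m X = a *: r -> r != 0 -> 0 <= c + a.
Proof.
move=> [_ Xpsd] rX r0; have := Xpsd (r^t*).
rewrite trmxCK mulmxDr scalemx1 mul_mx_scalar rX -scalerDl -scalemxAl mxE.
by rewrite pmulr_lge0 // dotmx_gt0.
Qed.

Lemma psd_diag_ge0 X i : psd X -> 0 <= X i i.
Proof. by move=> [_ /(_ (delta_mx i 0))]; rewrite trmxC_delta delta_qform. Qed.

Lemma psd_offdiag X i j : psd X -> 0 <= X i i + X j j - X i j - X j i.
Proof.
move=> [_ /(_ (delta_mx i 0 - delta_mx j 0))].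
rewrite [(_ - _)^T]linearB map_mxB !trmxC_delta !(mulmxBl, mulmxBr).
do 2 rewrite ![((_ + _ : 'M_1) 0 0)]mxE ![((- _ : 'M_1) 0 0)]mxE.
rewrite !delta_qform.
by have -> : X i i + X j j - X i j - X j i = X i i - X j i - (X i j - X j j) by ring.
Qed.

Lemma psd_outer u : psd (u *m u^t*).
Proof.
split=> [|v]; first by rewrite /selfadjoint trmx_mul map_mxM trmxCK.
have -> : v^t* *m (u *m u^t*) *m v = (v^t* *m u) *m (v^t* *m u)^t*.
  by rewrite trmx_mul map_mxM trmxCK !mulmxA.
by rewrite mxE big_ord1 [X in _ * X]mxE [X in _ * X^*]mxE mul_conjC_ge0.
Qed.

Lemma psd_diag_mx (d : 'rV[C]_n) : (forall k, 0 <= d 0 k) -> psd (diag_mx d).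
Proof.
move=> d_ge0; split.
  apply/matrixP => a b; rewrite !mxE eq_sym.
  by case: eqP => [->|]; rewrite ?mulr1n ?mulr0n ?rmorph0 // geC0_conj.
move=> v; rewrite mul_mx_diag mxE sumr_ge0 // => k _; rewrite !mxE.
by rewrite mulrAC mulrC mulr_ge0 // mulrC mul_conjC_ge0.
Qed.

Lemma psd_congr X (P : 'M[C]_n) : psd X -> psd (P^t* *m X *m P).
Proof.
move=> [Xsa Xpsd]; split=> [|v].
  by rewrite /selfadjoint !trmx_mul !map_mxM trmxCK Xsa mulmxA.
have -> : v^t* *m (P^t* *m X *m P) *m v = (P *m v)^t* *m X *m (P *m v).
  by rewrite trmx_mul map_mxM !mulmxA.
exact: Xpsd.
Qed.

Lemma spectral_diag_eigenvalue H k :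
  H \is normalmx -> eigenvalue H (spectral_diag H 0 k).
Proof.
move=> /orthomx_spectralP HE; set P := spectralmx H in HE.
have Punit : P \in unitmx by exact: spectral_unit.
apply/eigenvalueP; exists ('e_k *m P).
  by rewrite {1}HE !mulmxA mulmxK // -[_ *m diag_mx _]rowE row_diag_mx -scalemxAl.
apply: contraTneq isT => /(congr1 (mulmx^~ (invmx P))).
rewrite mulmxK // mul0mx => /matrixP/(_ 0 k).
by rewrite !mxE !eqxx => /eqP; rewrite oner_eq0.
Qed.

Lemma psd_scalar_sub_hermitian H (c : R) :
  H^t* = H -> (forall a, eigenvalue H a -> a <= c%:C) -> psd (c%:C *: 1%:M - H).
Proof.
move=> Hsa H_le.
have Hnormal : H \is normalmx.
  by apply/hermitian_normalmx/is_hermitianmxP; rewrite expr0 scale1r Hsa.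
have /orthomx_spectralP HE := Hnormal.
set P := spectralmx H in HE; set d := spectral_diag H in HE.
have -> : c%:C *: 1%:M - H = P^t* *m diag_mx (const_mx c%:C - d) *m P.
  rewrite -invmx_unitary ?spectral_unitarymx // linearB /= (@diag_const_mx _ n c%:C).
  by rewrite mulmxBr mulmxBl -HE scalar_mxC -mulmxA mulVmx ?spectral_unit // mulmx1 scalemx1.
apply/psd_congr/psd_diag_mx => k; rewrite !mxE subr_ge0.
exact/H_le/spectral_diag_eigenvalue.
Qed.

Lemma hermitian_diag_le H (c : R) i :
  H^t* = H -> (forall a, eigenvalue H a -> a <= c%:C) -> H i i <= c%:C.
Proof.
move=> Hsa H_le; have := psd_diag_ge0 i (psd_scalar_sub_hermitian Hsa H_le).
by rewrite !mxE eqxx mulr1 subr_ge0.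
Qed.

Lemma mul_delta_mx_entry (M N : 'M[C]_n) a b c d :
  (M *m delta_mx a b *m N) c d = M c a * N b d.
Proof.
by rewrite -(mul_delta_mx (0 : 'I_1)) mulmxA -colE -mulmxA -rowE mxE big_ord1 !mxE.
Qed.

Lemma entanglement_breaking_delta_ge0 (phi : 'M[C]_n -> 'M[C]_n) i j :
  entanglement_breaking phi ->
  0 <= phi (delta_mx i i) i i + phi (delta_mx j j) j j
       - phi (delta_mx i j) i j - phi (delta_mx j i) j i.
Proof.
move=> [m [v [w phiE]]]; pose M k := v k *m (w k)^t*.
have phi_delta a b c d : phi (delta_mx a b) c d = \sum_k M k c a * (M k d b)^*.
  rewrite phiE summxE; apply: eq_bigr => k _.
  rewrite -mulmxA mul_delta_mx_entry.
  by rewrite !mxE !big_ord1 !mxE rmorphM /= conjCK [w k b 0 * _]mulrC.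
have -> : phi (delta_mx i i) i i + phi (delta_mx j j) j j
    - phi (delta_mx i j) i j - phi (delta_mx j i) j i
    = \sum_k (M k i i - M k j j) * (M k i i - M k j j)^*.
  rewrite !phi_delta -big_split -!sumrB; apply: eq_bigr => k _.
  by rewrite rmorphB /=; ring.
by apply: sumr_ge0 => k _; exact: mul_conjC_ge0.
Qed.

End ComplexMatrix.

Section Gamma.
Variables (R : realType) (p : nat) (A : 'M[R[i]]_p).

Lemma gammaE t X a b :
  gamma A t X a b = t%:C * ntr X * (a == b)%:R + A a b * X a b.
Proof. by rewrite !mxE !mulrnAr mulr1. Qed.

Lemma gamma_const1 t : (0 < p)%N -> gamma A t (const_mx 1) = t%:C *: 1%:M + A.
Proof.
move=> p_gt0; have ntr1 : ntr (const_mx 1 : 'M[R[i]]_p) = 1.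
  rewrite /ntr /mxtrace; under eq_bigr do rewrite mxE.
  by rewrite sumr_const card_ord divff // pnatr_eq0 -lt0n.
by apply/matrixP => a b; rewrite gammaE ntr1 !mxE !mulr1 mulr_natr.
Qed.

Lemma positive_gamma_eigenvalue t l : (0 < p)%N ->
  positive_map (gamma A t) -> eigenvalue A l%:C -> - l <= t.
Proof.
move=> p_gt0 gamma_pos /eigenvalueP [r rA r0].
have J_psd : psd (const_mx 1 : 'M[R[i]]_p).
  have -> : const_mx 1 = (const_mx 1 : 'cV[R[i]]_p) *m (const_mx 1 : 'cV_p)^t*.
    by apply/matrixP => a b; rewrite outer_entry !mxE rmorph1 mulr1.
  exact: psd_outer.
have := gamma_pos _ J_psd; rewrite gamma_const1 // => /psd_shift_eigenvalue/(_ rA r0).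
by rewrite -rmorphD ler0c => ?; lra.
Qed.

End Gamma.

Section Graph.
Variables (R : realType) (p : nat) (e : rel 'I_p).
Hypotheses (e_sym : symmetric e) (e_irr : irreflexive e).
Local Notation A := (adjmx R e).

Lemma edge_neq i j : e i j -> i != j.
Proof. by apply: contraTneq => ->; rewrite e_irr. Qed.

Lemma positive_gamma_adjmx_edge t i j :
  positive_map (gamma A t) -> e i j -> p%:R <= 2 * t.
Proof.
move=> gamma_pos eij; have ij := edge_neq eij.
have p_gt0 : (0 < p)%N := leq_ltn_trans (leq0n i) (ltn_ord i).
pose u : 'cV[R[i]]_p := delta_mx i 0 + delta_mx j 0.
have uuE : u *m u^t* = delta_mx i i + delta_mx i j + delta_mx j i + delta_mx j j.
  by rewrite linearD map_mxD !trmxC_delta mulmxDl !mulmxDr !mul_delta_mx addrA.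
have := psd_offdiag i j (gamma_pos _ (psd_outer u)).
rewrite uuE !gammaE /ntr !mxtraceD !mxtrace_delta !mxE !eqxx (negbTE ij) eq_sym (negbTE ij).
rewrite eij e_sym eij !e_irr /=.
have -> : t%:C * ((1 + 0 + 0 + 1) / p%:R) = (2 * t / p%:R)%:C.
  by rewrite rmorphM fmorphV rmorphM /= !rmorph_nat; ring.
rewrite !(mulr1, mulr0, mul0r, mul1r, add0r, addr0) -(rmorph1 (real_complex R)).
rewrite -rmorphD -!rmorphB ler0c => h.
have : 1 <= 2 * t / p%:R by lra.
by rewrite ler_pdivlMr ?ltr0n // mul1r.
Qed.

Lemma entanglement_breaking_gamma_adjmx_edge t i j :
  entanglement_breaking (gamma A t) -> e i j -> p%:R <= t.
Proof.
move=> gamma_eb eij; have ij := edge_neq eij.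
have p_gt0 : (0 < p)%N := leq_ltn_trans (leq0n i) (ltn_ord i).
have := entanglement_breaking_delta_ge0 i j gamma_eb.
rewrite !gammaE /ntr !mxtrace_delta !mxE !eqxx (negbTE ij) eq_sym (negbTE ij).
rewrite eij e_sym eij !e_irr /= !(mulr1, mulr0, mul0r, mul1r, add0r, addr0).
have -> : t%:C / p%:R = (t / p%:R)%:C by rewrite rmorphM fmorphV /= rmorph_nat.
rewrite -(rmorph1 (real_complex R)) -rmorphD -!rmorphB ler0c => h.
have : 1 <= t / p%:R by lra.
by rewrite ler_pdivlMr ?ltr0n // mul1r.
Qed.

Lemma card_edgesE : (#|edges e|%:R : R[i]) = \sum_a \sum_b (e a b)%:R.
Proof.
rewrite pair_bigA /= -sum1_card natr_sum big_mkcond /=.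
by apply: eq_bigr => ab _; rewrite /edges inE; case: (e _ _).
Qed.

Lemma adjmx_eigenvalue_edges l : eigenvalue A l%:C -> 0 <= #|edges e|%:R + 2 * l.
Proof.
move=> /eigenvalueP [r rA r0]; pose w k := r 0 k.
pose S := (r *m r^t*) 0 0.
have SE : S = \sum_k w k * (w k)^* by rewrite /S mxE; apply: eq_bigr => k _; rewrite !mxE.
have quad : \sum_a \sum_b (e a b)%:R * (w a * (w b)^*) = l%:C * S.
  have : (r *m A *m r^t*) 0 0 = l%:C * S by rewrite rA -scalemxAl mxE.
  rewrite row_qformE => <-; apply: eq_bigr => a _; apply: eq_bigr => b _.
  by rewrite mxE mulrCA mulrA.
have quad' : \sum_a \sum_b (e a b)%:R * ((w a)^* * w b) = l%:C * S.
  rewrite -quad exchange_big; apply: eq_bigr => a _; apply: eq_bigr => b _.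
  by rewrite e_sym [w a * _]mulrC.
(* Summing |w a + w b|^2 over ordered edges, using |w a|^2 + |w b|^2 <= S. *)
have edge_le a b : (e a b)%:R * ((w a + w b) * (w a + w b)^*) <=
    (e a b)%:R * S + (e a b)%:R * (w a * (w b)^*) + (e a b)%:R * ((w a)^* * w b).
  case eab: (e a b); last by rewrite !mul0r !addr0.
  rewrite !mul1r rmorphD /= SE -addrA.
  have -> : (w a + w b) * ((w a)^* + (w b)^*) =
    w a * (w a)^* + w b * (w b)^* + (w a * (w b)^* + (w a)^* * w b) by ring.
  by rewrite lerD2r ler_pair_sum ?edge_neq // => k; exact: mul_conjC_ge0.
have sum_ge0 : 0 <= \sum_a \sum_b (e a b)%:R * ((w a + w b) * (w a + w b)^*).
  by do 2!apply: sumr_ge0 => ? _; rewrite mulr_ge0 ?ler0n ?mul_conjC_ge0.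
have := le_trans sum_ge0 (ler_sum _ (fun a _ => ler_sum _ (fun b _ => edge_le a b))).
under eq_bigr do rewrite !big_split /=.
rewrite !big_split /= quad quad'.
under eq_bigr do rewrite -mulr_suml.
rewrite -mulr_suml -card_edgesE.
have -> : #|edges e|%:R * S + l%:C * S + l%:C * S = (#|edges e|%:R + 2 * l)%:C * S.
  by rewrite rmorphD rmorphM /= !rmorph_nat; ring.
by rewrite pmulr_lge0 ?ler0c // /S dotmx_gt0.
Qed.

Lemma gamma_theta_feasible t H (th : R) : (0 < p)%N -> theta_feasible e H ->
  gamma A t (th%:C *: 1%:M - H) = (t * (th - 1))%:C *: 1%:M + - A.
Proof.
move=> p_gt0 [_ [H_diag H_edge]].
have ntrE : ntr (th%:C *: 1%:M - H) = (th - 1)%:C.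
  rewrite /ntr /mxtrace; under eq_bigr do rewrite !mxE eqxx mulr1 H_diag.
  rewrite sumr_const card_ord -[_ *+ p]mulr_natr mulfK ?pnatr_eq0 -?lt0n //.
  by rewrite rmorphB.
apply/matrixP => a b; rewrite gammaE ntrE !mxE rmorphM.
have [<-|ab] := eqVneq a b; first by rewrite e_irr /= !mul0r !mulr1 !addr0 subr0.
rewrite /= !mulr0 add0r sub0r; case eab: (e a b) => /=; last by rewrite mul0r subr0.
by rewrite H_edge // mul1r sub0r.
Qed.

Lemma positive_gamma_theta t H (th l : R) : (0 < p)%N ->
  positive_map (gamma A t) -> theta_feasible e H -> is_lambda_max H th ->
  eigenvalue A l%:C -> l <= t * (th - 1).
Proof.
move=> p_gt0 gamma_pos H_feas [_ H_le] /eigenvalueP [r rA r0].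
have rNA : r *m - A = - l%:C *: r by rewrite mulmxN rA scaleNr.
have := gamma_pos _ (psd_scalar_sub_hermitian H_feas.1 H_le).
rewrite gamma_theta_feasible // => /psd_shift_eigenvalue/(_ rNA r0).
by rewrite -rmorphN -rmorphD ler0c subr_ge0.
Qed.

Lemma theta_feasible_lambda_max_ge1 (i : 'I_p) H (th : R) :
  theta_feasible e H -> is_lambda_max H th -> 1 <= th.
Proof.
move=> [H_sa [H_diag _]] [_ H_le].
by have := hermitian_diag_le i H_sa H_le; rewrite H_diag -lecR rmorph1.
Qed.

End Graph.

Theorem mainTheorem11 (R : realType) (p : nat) (e : rel 'I_p)
  (e_sym : symmetric e) (e_irr : irreflexive e)
  (e_edge : exists i j, e i j)
  (tpos teb th lmin lmax : R) :
  is_t_pos (adjmx R e) tpos ->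
  is_t_eb (adjmx R e) teb ->
  is_theta_compl e th ->
  is_lambda_min (adjmx R e) lmin ->
  is_lambda_max (adjmx R e) lmax ->
  [/\ 1 <= tpos,
      - lmin <= tpos,
      - (p%:R * lmin) / (#|edges e|)%:R <= tpos,
      - (p%:R * lmin) / teb <= tpos
    & lmax / (th - 1) <= tpos].
Proof.
move=> [tpos_pos _] [teb_eb _] [[H [H_feas H_max]] _] [lmin_eig _] [lmax_eig _].
have [i [j eij]] := e_edge.
have p_gt0 : (0 < p)%N := leq_ltn_trans (leq0n i) (ltn_ord i).
have p_ge2 : (2 : R) <= p%:R.
  rewrite ler_nat -[p]card_ord (leq_trans _ (max_card [set i; j])) //.
  by rewrite cards2 (edge_neq e_irr eij).
have p_le_2tpos := positive_gamma_adjmx_edge e_sym e_irr tpos_pos eij.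
have lmin_le := positive_gamma_eigenvalue p_gt0 tpos_pos lmin_eig.
have edges_ge := adjmx_eigenvalue_edges e_sym e_irr lmin_eig.
have p_le_teb := entanglement_breaking_gamma_adjmx_edge e_sym e_irr teb_eb eij.
have th_ge1 := theta_feasible_lambda_max_ge1 i H_feas H_max.
have lmax_le := positive_gamma_theta e_irr p_gt0 tpos_pos H_feas H_max lmax_eig.
have E_gt0 : (0 : R) < #|edges e|%:R.
  by rewrite ltr0n card_gt0; apply/set0Pn; exists (i, j); rewrite inE.
split=> //; first lra.
- by rewrite ler_pdivrMr //; nra.
- by rewrite ler_pdivrMr; nra.
- (* for th = 1 the quotient is 0, by the convention x / 0 = 0 *)
  have [->|th_gt1] := eqVneq th 1.
    by rewrite subrr invr0 mulr0; lra.
  by rewrite ler_pdivrMr // subr_gt0 lt_def th_gt1.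
Qed.
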